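(* Let $\phi:\mathbb{R}^2\to[-\infty,0]$ be a Borel function. Then $\phi\le\phi_G$ for some $G\in\mathfrak{M}$ if and only if $$(1-t)\phi(y^0)+t\,\phi(y^1)\le t(1-t)\,c(y^0,y^1),\qquad y^0,y^1\in\mathbb{R}^2,\ t\in[0,1].$$ The set of such functions $\phi$ is convex.
   Context: $c(x,y)=(x_1-y_1)(x_2-y_2)$ for $x,y\in\mathbb{R}^2$. $\mathfrak{M}$: family of maximal monotone sets $G\subset\mathbb{R}^2$ (monotone: $c(r,s)\ge0$ for all $r,s\in G$; maximal: not a proper subset of a monotone set). $\phi_G(y)=\inf_{x\in G}c(x,y)$. *)

(* R : realType, points of R^2 as pairs R * R,
   Borel sigma-algebra on R^2 = product sigma-algebra, values in \bar R. *)
From HB Require Import structures.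
From mathcomp Require Import all_boot all_order all_algebra.
From mathcomp Require Import all_classical all_reals all_analysis.
From mathcomp Require Import measurable_realfun.
Set Implicit Arguments. Unset Strict Implicit. Unset Printing Implicit Defensive.
Import Order.TTheory GRing.Theory Num.Theory.
Local Open Scope classical_set_scope.
Local Open Scope ring_scope.

Definition cost (R : realType) (x y : R * R) : R := (x.1 - y.1) * (x.2 - y.2).

Definition monotone_set (R : realType) (G : set (R * R)) : Prop :=
  forall r s, G r -> G s -> 0 <= cost r s.

Definition maximal_monotone (R : realType) (G : set (R * R)) : Prop :=
  monotone_set G /\
  forall H : set (R * R), monotone_set H -> G `<=` H -> H = G.

Definition phiG (R : realType) (G : set (R * R)) (y : R * R) : \bar R :=
  ereal_inf [set (cost x y)%:E | x in G].

Definition dominated_by_some_phiG (R : realType) (phi : R * R -> \bar R) : Prop :=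
  exists G : set (R * R), maximal_monotone G /\ forall y, (phi y <= phiG G y)%E.

Definition borel_nonpos (R : realType) (phi : R * R -> \bar R) : Prop :=
  measurable_fun [set: R * R] phi /\ forall y, (phi y <= 0)%E.

Definition c_concave_ineq (R : realType) (phi : R * R -> \bar R) : Prop :=
  forall (y0 y1 : R * R) (t : R), 0 <= t <= 1 ->
    ((1 - t)%:E * phi y0 + t%:E * phi y1 <= (t * (1 - t) * cost y0 y1)%:E)%E.

From HB Require Import structures.
From mathcomp Require Import all_boot all_order all_algebra.
From mathcomp Require Import all_classical all_reals all_analysis.
From mathcomp Require Import measurable_realfun.
From mathcomp Require Import ring lra.
Import Order.TTheory GRing.Theory Num.Theory.
Local Open Scope classical_set_scope.
Local Open Scope ring_scope.

(* If phi <= phi_G, take x in G with c(x, y_t) <= 0 (it exists by maximality,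
   y_t being the convex combination of y0 and y1); the identity
   (1-t) c(x,y0) + t c(x,y1) = c(x,y_t) + t(1-t) c(y0,y1) gives the inequality.
   Conversely, on each line x1 + x2 = s, the points x with c(x,a) >= phi(a)
   form an interval [lo_a(s), hi_a(s)]; the inequality makes any two of these
   intervals intersect, so L(s) := sup_a lo_a(s) lies in all of them.  Both L
   and s - L are nondecreasing, hence {(L s, s - L s)} is maximal monotone,
   and phi <= phi_G on it by construction.  Convexity follows because the
   inequality is preserved by convex combinations. *)

Section Cost.
Context {R : realType}.
Implicit Types (a b x y : R * R) (s t u p q : R).

Lemma costC x y : cost x y = cost y x.
Proof. by rewrite /cost; ring. Qed.

Definition convex_pt t a b : R * R :=
  ((1 - t) * a.1 + t * b.1, (1 - t) * a.2 + t * b.2).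

Lemma cost_convex_pt x a b t :
  (1 - t) * cost x a + t * cost x b =
  cost x (convex_pt t a b) + t * (1 - t) * cost a b.
Proof. by rewrite /cost /=; ring. Qed.

Definition slice_mid a s := (a.1 - a.2 + s) / 2.

Lemma cost_antidiag a s u :
  cost (u, s - u) a = ((s - a.1 - a.2) / 2) ^+ 2 - (u - slice_mid a s) ^+ 2.
Proof. by rewrite /cost /slice_mid /=; field. Qed.

Lemma cost_slice_mid_ge0 a s : 0 <= cost (slice_mid a s, s - slice_mid a s) a.
Proof. by rewrite cost_antidiag subrr expr0n subr0 sqr_ge0. Qed.

Lemma slice_mid_convex_pt t a b s :
  slice_mid (convex_pt t a b) s = (1 - t) * slice_mid a s + t * slice_mid b s.
Proof. by rewrite /slice_mid /=; field. Qed.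

Lemma sqrt_sqrD_lipschitz (p v w : R) : 0 <= p ->
  `|Num.sqrt (v ^+ 2 + p) - Num.sqrt (w ^+ 2 + p)| <= `|v - w|.
Proof.
move=> p0; set A := Num.sqrt _; set B := Num.sqrt _.
have AB0 : 0 <= A * B by rewrite mulr_ge0 ?sqrtr_ge0.
have A2 : A ^+ 2 = v ^+ 2 + p by rewrite sqr_sqrtr // addr_ge0 // sqr_ge0.
have B2 : B ^+ 2 = w ^+ 2 + p by rewrite sqr_sqrtr // addr_ge0 // sqr_ge0.
have AB2 : (A * B) ^+ 2 = (v * w + p) ^+ 2 + p * (v - w) ^+ 2.
  by rewrite exprMn A2 B2; ring.
have AB : v * w + p <= A * B by have := sqr_ge0 (v - w); nra.
rewrite -ler_sqr ?nnegrE ?normr_ge0 // !real_normK ?num_real //; nra.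
Qed.

Section Slice.
Variables (a : R * R) (p : R).
Hypothesis p_le0 : p <= 0.

Definition slice_rad s := Num.sqrt (((s - a.1 - a.2) / 2) ^+ 2 - p).
Definition slice_lo s := slice_mid a s - slice_rad s.
Definition slice_hi s := slice_mid a s + slice_rad s.

Lemma cost_ge_level s u :
  (p <= cost (u, s - u) a) = (slice_lo s <= u <= slice_hi s).
Proof.
rewrite /slice_lo /slice_hi cost_antidiag.
have r0 : 0 <= slice_rad s by exact: sqrtr_ge0.
have r2 : slice_rad s ^+ 2 = ((s - a.1 - a.2) / 2) ^+ 2 - p.
  by rewrite sqr_sqrtr // subr_ge0 (le_trans p_le0) ?sqr_ge0.
by apply/idP/andP => [h|[h1 h2]]; [split|]; nra.
Qed.

Lemma slice_rad_lipschitz s s' : `|slice_rad s' - slice_rad s| <= `|(s' - s) / 2|.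
Proof.
have np : 0 <= - p by rewrite oppr_ge0.
have -> : (s' - s) / 2 = (s' - a.1 - a.2) / 2 - (s - a.1 - a.2) / 2 by field.
exact: sqrt_sqrD_lipschitz.
Qed.

Lemma slice_lo_homo : {homo slice_lo : s s' / s <= s'}.
Proof.
move=> s s' ss'; have := slice_rad_lipschitz s s'.
rewrite /slice_lo /slice_mid ler_norml ger0_norm; lra.
Qed.

Lemma slice_lo_homo_sub : {homo (fun s => s - slice_lo s) : s s' / s <= s'}.
Proof.
move=> s s' ss'; have := slice_rad_lipschitz s s'.
rewrite /slice_lo /slice_mid ler_norml ger0_norm; lra.
Qed.

End Slice.

(* A point u strictly between disjoint slices is slice_mid of some convex_pt t a b
   with 0 < t < 1; at x = (u, s - u) the identity cost_convex_pt then gives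
   (1-t) c(x,a) + t c(x,b) >= t(1-t) c(a,b), while c(x,a) < p and c(x,b) < q. *)
Lemma slices_meet a b p q s : p <= 0 -> q <= 0 ->
  (forall t, 0 <= t <= 1 -> (1 - t) * p + t * q <= t * (1 - t) * cost a b) ->
  slice_lo a p s <= slice_hi b q s.
Proof.
move=> p0 q0 cc; rewrite leNgt; apply/negP => hba.
pose u := (slice_hi b q s + slice_lo a p s) / 2.
have u_lt_lo : u < slice_lo a p s by rewrite /u; lra.
have hi_lt_u : slice_hi b q s < u by rewrite /u; lra.
have lo_le_mid : slice_lo a p s <= slice_mid a s by rewrite /slice_lo gerBl sqrtr_ge0.
have mid_le_hi : slice_mid b s <= slice_hi b q s by rewrite /slice_hi lerDl sqrtr_ge0.
have mab : 0 < slice_mid a s - slice_mid b s by lra.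
pose t := (slice_mid a s - u) / (slice_mid a s - slice_mid b s).
have t0 : 0 < t by rewrite divr_gt0 //; lra.
have t1 : t < 1 by rewrite ltr_pdivrMr // mul1r; lra.
have u_mid : u = slice_mid (convex_pt t a b) s.
  by rewrite slice_mid_convex_pt /t; field; rewrite gt_eqF.
have ua : cost (u, s - u) a < p.
  by rewrite ltNge (cost_ge_level _ _ p0) negb_and -ltNge u_lt_lo.
have ub : cost (u, s - u) b < q.
  by rewrite ltNge (cost_ge_level _ _ q0) negb_and -!ltNge hi_lt_u orbT.
have t01 : 0 <= t <= 1 by apply/andP; split; apply: ltW.
have := cost_convex_pt (u, s - u) a b t.
have := cost_slice_mid_ge0 (convex_pt t a b) s; rewrite -u_mid.
have := cc t t01; nra.
Qed.

End Cost.

Section MaximalMonotone.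
Context {R : realType}.
Implicit Types (G : set (R * R)) (g : R -> R) (x y : R * R).

Definition antidiag_graph g : set (R * R) := range (fun s => (g s, s - g s)).

Lemma antidiag_graph_maximal g :
  {homo g : s s' / s <= s'} -> {homo (fun s => s - g s) : s s' / s <= s'} ->
  maximal_monotone (antidiag_graph g).
Proof.
move=> g_homo gsub_homo; split.
  move=> _ _ [s _ <-] [s' _ <-]; rewrite /cost /=.
  have [ss'|/ltW s's] := leP s s'.
    by have := g_homo _ _ ss'; have := gsub_homo _ _ ss'; nra.
  by have := g_homo _ _ s's; have := gsub_homo _ _ s's; nra.
move=> H monH GH; apply/seteqP; split => [[x1 x2] Hx|]; last exact: GH.
pose s := x1 + x2.
have /(monH _ _ Hx) : H (g s, s - g s) by apply: GH; exists s.
rewrite /cost /= => gx.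
have gs : g s = x1 by rewrite /s in gx *; nra.
by exists s; rewrite // gs /s; congr pair; ring.
Qed.

(* Otherwise G `|` [set y] would be a strictly larger monotone set. *)
Lemma maximal_monotone_cost_le0 G y : maximal_monotone G ->
  exists2 x, G x & cost x y <= 0.
Proof.
move=> [monG maxG]; apply: contrapT => /forall2NP pos.
have {}pos x : G x -> 0 < cost x y.
  by move=> Gx; case: (pos x) => // /negP; rewrite -ltNge.
have monGy : monotone_set (G `|` [set y]).
  move=> r r' [Gr|->] [Gr'|->].
  - exact: monG.
  - exact/ltW/pos.
  - by rewrite costC; exact/ltW/pos.
  - by rewrite /cost; nra.
have Gy : G y by rewrite -(maxG _ monGy (@subsetUl _ G [set y])); right.
by have := pos _ Gy; rewrite /cost; nra.
Qed.

Lemma phiG_le_cost G x y : G x -> (phiG G y <= (cost x y)%:E)%E.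
Proof. by move=> Gx; apply: ereal_inf_lbound; exists x. Qed.

End MaximalMonotone.

Lemma dominated_c_concave {R : realType} (phi : R * R -> \bar R) :
  dominated_by_some_phiG phi -> c_concave_ineq phi.
Proof.
move=> [G [maxG dom]] y0 y1 t /andP[t0 t1].
have [x Gx cx] := maximal_monotone_cost_le0 G (convex_pt t y0 y1) maxG.
have le_cost y : (phi y <= (cost x y)%:E)%E.
  exact: le_trans (dom y) (phiG_le_cost G x y Gx).
apply: le_trans (leeD (lee_wpmul2l _ (le_cost y0)) (lee_wpmul2l _ (le_cost y1))) _.
- by rewrite lee_fin subr_ge0.
- by rewrite lee_fin.
by rewrite -!EFinM -EFinD lee_fin cost_convex_pt; lra.
Qed.

Section SupFamily.
Context {R : realType} {I : Type} (A : set I) (f : I -> R -> R).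
Hypotheses (A0 : A !=set0) (f_ub : forall s, has_ubound [set f i s | i in A]).

Let image_neq0 s : [set f i s | i in A] !=set0.
Proof. by case: A0 => i Ai; exists (f i s), i. Qed.

Let le_sup i s : A i -> f i s <= sup [set f i s | i in A].
Proof. by move=> Ai; apply: ub_le_sup => //; exists i. Qed.

Lemma sup_homo : (forall i, A i -> {homo f i : s s' / s <= s'}) ->
  {homo (fun s => sup [set f i s | i in A]) : s s' / s <= s'}.
Proof.
move=> f_homo s s' ss'; apply: ge_sup => // _ [i Ai <-].
exact: le_trans (f_homo i Ai _ _ ss') (le_sup i s' Ai).
Qed.

Lemma sup_homo_sub : (forall i, A i -> {homo (fun s => s - f i s) : s s' / s <= s'}) ->
  {homo (fun s => s - sup [set f i s | i in A]) : s s' / s <= s'}.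
Proof.
move=> f_homo s s' ss'.
suff : sup [set f i s' | i in A] <= sup [set f i s | i in A] + (s' - s) by lra.
apply: ge_sup => // _ [i Ai <-].
by have := f_homo i Ai _ _ ss'; have := le_sup i s Ai; lra.
Qed.

End SupFamily.

Section Domination.
Context {R : realType} {phi : R * R -> \bar R}.
Hypotheses (phi_le0 : forall y, (phi y <= 0)%E) (phi_cc : c_concave_ineq phi).

Let fin_pts := [set a | phi a \is a fin_num].
Let level a := fine (phi a).
Let graph_lo s := sup [set slice_lo a (level a) s | a in fin_pts].

Let level_le0 a : level a <= 0.
Proof. exact: fine_le0. Qed.

Let phi_notfin y : ~ fin_pts y -> phi y = -oo%E.
Proof.
by move=> /negP/fin_numPn[//|phiy]; have := phi_le0 y; rewrite phiy leye_eq.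
Qed.

Let slices_meet_fin a b s : fin_pts a -> fin_pts b ->
  slice_lo a (level a) s <= slice_hi b (level b) s.
Proof.
move=> fa fb; apply: slices_meet => // t t01.
by have := phi_cc a b t t01; rewrite -(fineK fa) -(fineK fb) -!EFinM -EFinD lee_fin.
Qed.

Lemma c_concave_dominated : dominated_by_some_phiG phi.
Proof.
have [[a0 fa0]|nofin] := pselect (exists a, fin_pts a); last first.
  exists (antidiag_graph id); split.
    by apply: antidiag_graph_maximal => // s s' _; rewrite !subrr.
  by move=> y; rewrite phi_notfin ?leNye // => fy; apply: nofin; exists y.
have A0 : fin_pts !=set0 by exists a0.
have lo_ub s : has_ubound [set slice_lo a (level a) s | a in fin_pts].
  by exists (slice_hi a0 (level a0) s) => _ [a fa <-]; exact: slices_meet_fin.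
exists (antidiag_graph graph_lo); split.
  apply: antidiag_graph_maximal.
    by apply: sup_homo => // a _; exact: slice_lo_homo.
  by apply: sup_homo_sub => // a _; exact: slice_lo_homo_sub.
move=> y; apply: le_ereal_inf_tmp => _ [_ [s _ <-] <-].
have [fy|/phi_notfin->] := pselect (fin_pts y); last exact: leNye.
rewrite -(fineK fy) lee_fin (cost_ge_level _ _ (level_le0 y)); apply/andP; split.
  by apply: ub_le_sup => //; exists y.
apply: ge_sup => [|_ [a fa <-]]; last exact: slices_meet_fin.
by exists (slice_lo a0 (level a0) s), a0.
Qed.

End Domination.

Lemma le0_exchange_comb {R : realType} (a b c d : R) (x0 x1 z0 z1 : \bar R) :
  0 <= a -> 0 <= b -> 0 <= c -> 0 <= d ->
  (x0 <= 0 -> x1 <= 0 -> z0 <= 0 -> z1 <= 0 ->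
  a%:E * (c%:E * x0 + d%:E * z0) + b%:E * (c%:E * x1 + d%:E * z1) =
  c%:E * (a%:E * x0 + b%:E * x1) + d%:E * (a%:E * z0 + b%:E * z1))%E.
Proof.
move=> a0 b0 c0 d0 x00 x10 z00 z10.
have sc_le0 (r : R) (z : \bar R) : 0 <= r -> (z <= 0 -> r%:E * z <= 0)%E.
  by move=> r0 zle0; rewrite mule_ge0_le0 ?lee_fin.
rewrite !le0_muleDr ?sc_le0 // !muleA -!EFinM.
by rewrite addeACA [a * d]mulrC [b * c]mulrC [a * c]mulrC [b * d]mulrC.
Qed.

Section ConvexCombination.
Context {R : realType} {phi psi : R * R -> \bar R} {lam : R}.
Hypothesis lam01 : 0 <= lam <= 1.

Let comb y := ((1 - lam)%:E * phi y + lam%:E * psi y)%E.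

Lemma borel_nonpos_convex_comb :
  borel_nonpos phi -> borel_nonpos psi -> borel_nonpos comb.
Proof.
case/andP: lam01 => l0 l1 [mphi phi0] [mpsi psi0]; split.
  by apply: emeasurable_funD; exact: measurable_funeM.
by move=> y; rewrite adde_le0 // mule_ge0_le0 // lee_fin ?subr_ge0.
Qed.

Lemma c_concave_convex_comb :
  (forall y, (phi y <= 0)%E) -> (forall y, (psi y <= 0)%E) ->
  c_concave_ineq phi -> c_concave_ineq psi -> c_concave_ineq comb.
Proof.
case/andP: lam01 => l0 l1 phi0 psi0 ccphi ccpsi y0 y1 t t01.
have [t0 t1] := andP t01.
rewrite le0_exchange_comb ?subr_ge0 //.
have l0' : (0 <= (1 - lam)%:E)%E by rewrite lee_fin subr_ge0.
have l1' : (0 <= lam%:E)%E by rewrite lee_fin.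
apply: le_trans (leeD (lee_wpmul2l l0' (ccphi y0 y1 t t01))
                      (lee_wpmul2l l1' (ccpsi y0 y1 t t01))) _.
by rewrite -!EFinM -EFinD lee_fin; lra.
Qed.

End ConvexCombination.

Theorem lemma9 (R : realType) :
  (forall phi : R * R -> \bar R, borel_nonpos phi ->
     (dominated_by_some_phiG phi <-> c_concave_ineq phi)) /\
  (forall (phi psi : R * R -> \bar R) (lam : R), 0 <= lam <= 1 ->
     borel_nonpos phi -> dominated_by_some_phiG phi ->
     borel_nonpos psi -> dominated_by_some_phiG psi ->
     let chi := fun y => ((1 - lam)%:E * phi y + lam%:E * psi y)%E in
     borel_nonpos chi /\ dominated_by_some_phiG chi).
Proof.
split=> [phi [_ phi0]|phi psi lam lam01 bphi dphi bpsi dpsi chi].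
  by split; [exact: dominated_c_concave | exact: c_concave_dominated].
have bchi : borel_nonpos chi by exact: borel_nonpos_convex_comb.
split=> //; apply: c_concave_dominated bchi.2 _.
by apply: c_concave_convex_comb bphi.2 bpsi.2 _ _ => //; exact: dominated_c_concave.
Qed.
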